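(* Let $\Gamma$ be a connected finite simple graph on $N\ge3$ vertices with minimum degree $d\ge3$ and $\varepsilon>\frac{\sqrt{d-1}}{d}$. If $u\ne v$ are vertices with $\mathcal N(u)\cap\mathcal N(v)\ne\emptyset$, then $$\big|\{w\in\mathcal N(u)\triangle\mathcal N(v):\deg w\in\{d,d+1\}\}\big|\ge 2d-1.$$
   Context: For a finite simple graph $\Gamma=(V,E)$ without isolated vertices, $\deg v$ is the number of neighbours of $v$ and $\mathcal N(v)=\{w\in V: w\sim v\}$; $\triangle$ denotes symmetric difference of sets. The normalized Laplacian acts on functions $f:V\to\mathbb R$ by $\Delta f(v)=f(v)-\frac{1}{\deg v}\sum_{w\sim v}f(w)$; its eigenvalues are $0=\lambda_1\le\lambda_2\le\dots\le\lambda_N$, and $\varepsilon:=\min_i|1-\lambda_i|$. $d$ denotes the minimum vertex degree. *)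

From HB Require Import structures.
From mathcomp Require Import all_boot all_order all_algebra.
From mathcomp Require Import reals.
Set Implicit Arguments. Unset Strict Implicit. Unset Printing Implicit Defensive.
Import Order.TTheory GRing.Theory Num.Theory.
Local Open Scope ring_scope.

Definition simple_graph n (e : rel 'I_n) : Prop :=
  symmetric e /\ irreflexive e.

Definition connected_graph n (e : rel 'I_n) : Prop :=
  forall x y, connect e x y.

Definition nbhd n (e : rel 'I_n) (v : 'I_n) : {set 'I_n} := [set w | e v w].
Definition deg n (e : rel 'I_n) (v : 'I_n) : nat := #|nbhd e v|.

(* minimum vertex degree (n is an upper bound for all degrees, so it is a
   neutral default for the minimum over the nonempty vertex set) *)
Definition mindeg n (e : rel 'I_n) : nat := \big[minn/n]_(v < n) deg e v.

Definition symdiff (T : finType) (A B : {set T}) : {set T} := (A :\: B) :|: (B :\: A).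

Definition nlaplacian (R : realType) n (e : rel 'I_n) : 'M[R]_n :=
  \matrix_(v, w) ((v == w)%:R - (e v w)%:R / (deg e v)%:R).

Definition nlap_eigenvalue (R : realType) n (e : rel 'I_n) (lam : R) : Prop :=
  exists2 f : 'cV[R]_n, f != 0 & nlaplacian R e *m f = lam *: f.
Arguments nlaplacian R {n} e.
Arguments nlap_eigenvalue R {n} e lam.

From HB Require Import structures.
From mathcomp Require Import all_boot all_order all_algebra.
From mathcomp Require Import reals.
From mathcomp Require Import ring lra zify.
From mathcomp Require classical_sets boolp topology normedtype derive.
Set Implicit Arguments. Unset Strict Implicit. Unset Printing Implicit Defensive.
Import Order.TTheory GRing.Theory Num.Theory.
Local Open Scope ring_scope.

(* With W = D^-1 A the random-walk matrix, the normalized Laplacian is 1 - W,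
   and W is self-adjoint for the inner product <x, y> = sum_v deg v x_v y_v.
   The hypothesis says that every eigenvalue of W has modulus greater than
   c := sqrt (d - 1) / d, and a variational argument then gives
   |W x|^2 > c^2 |x|^2 for x <> 0.  For x = e_u - e_v, |x|^2 = deg u + deg v
   and |W x|^2 is the sum of 1 / deg w over w in N(u) (+) N(v).  Bounding
   1 / deg w by 1 / d on the k vertices of degree d or d + 1 and by
   1 / (d + 2) elsewhere, and using |N(u) (+) N(v)| <= deg u + deg v - 2
   (u and v share a neighbour), the inequality fails unless k >= 2 d - 1. *)

Lemma linear_coef_eq0 (R : realFieldType) (a b : R) :
  (forall t, 0 <= t * a + t ^+ 2 * b) -> a = 0.
Proof.
move=> ge0; set s := `|b| + 1.
have s_gt0 : 0 < s by rewrite /s ltr_pwDr ?normr_ge0.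
have := ge0 (- a / s).
have -> : - a / s * a + (- a / s) ^+ 2 * b = a ^+ 2 * (b - s) / s ^+ 2.
  by field; rewrite gt_eqF.
rewrite pmulr_lge0 ?invr_gt0 ?exprn_gt0 // => a2.
have bs : b - s < 0 by rewrite /s subr_lt0 (le_lt_trans (ler_norm b)) ?ltrDl.
apply/eqP; rewrite -sqrf_eq0 eq_le sqr_ge0 andbT; nra.
Qed.

(* Imported only inside this module: the set notations of classical_sets
   would shadow those of finset used below. *)
Module WeightedSpectralBound.
Import classical_sets boolp topology normedtype derive.
Import numFieldNormedType.Exports.

Section WeightedDot.
Variables (R : realType) (n : nat) (w : 'I_n -> R).
Implicit Types x y z : 'cV[R]_n.

Definition wdot (x y : 'cV[R]_n) : R := \sum_i w i * x i 0 * y i 0.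

Lemma wdotC x y : wdot x y = wdot y x.
Proof. by apply: eq_bigr => i _; ring. Qed.

Lemma wdotDl x y z : wdot (x + y) z = wdot x z + wdot y z.
Proof.
by rewrite /wdot -big_split /=; apply: eq_bigr => i _; rewrite !mxE; ring.
Qed.

Lemma wdotZl a x z : wdot (a *: x) z = a * wdot x z.
Proof. by rewrite /wdot mulr_sumr; apply: eq_bigr => i _; rewrite !mxE; ring. Qed.

Lemma wdot0l z : wdot 0 z = 0.
Proof. by rewrite /wdot big1 // => i _; rewrite mxE mulr0 mul0r. Qed.

Lemma wdotDr x y z : wdot z (x + y) = wdot z x + wdot z y.
Proof. by rewrite wdotC wdotDl ![wdot _ z]wdotC. Qed.

Lemma wdotZr a x z : wdot z (a *: x) = a * wdot z x.
Proof. by rewrite wdotC wdotZl wdotC. Qed.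

Lemma wdot_delta_sub (u v : 'I_n) : u != v ->
  wdot (delta_mx u 0 - delta_mx v 0) (delta_mx u 0 - delta_mx v 0) = w u + w v.
Proof.
move=> uv; rewrite /wdot (bigD1 u) // (bigD1 v) 1?eq_sym //=.
rewrite big1 => [|i /andP[iu iv]].
  by rewrite !mxE !eqxx (negPf uv) eq_sym (negPf uv) /=; ring.
by rewrite !mxE (negPf iu) (negPf iv) /=; ring.
Qed.

Hypothesis w_gt0 : forall i, 0 < w i.

Lemma wdot_coord_le x i : w i * x i 0 ^+ 2 <= wdot x x.
Proof.
rewrite /wdot (bigD1 i) //= -mulrA -expr2 lerDl.
by apply: sumr_ge0 => j _; rewrite -mulrA -expr2 mulr_ge0 ?sqr_ge0 // ltW.
Qed.

Lemma wdot_ge0 x : 0 <= wdot x x.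
Proof.
by apply: sumr_ge0 => i _; rewrite -mulrA -expr2 mulr_ge0 ?sqr_ge0 // ltW.
Qed.

Lemma wdot_eq0 x : (wdot x x == 0) = (x == 0).
Proof.
apply/idP/eqP => [x0|->]; last by rewrite wdot0l.
apply/matrixP => i j; rewrite ord1 mxE.
have := wdot_coord_le x i; rewrite (eqP x0) pmulr_rle0 // => xi.
by apply/eqP; rewrite -sqrf_eq0 eq_le xi sqr_ge0.
Qed.

Lemma wdot_gt0 x : (0 < wdot x x) = (x != 0).
Proof. by rewrite lt_def wdot_eq0 wdot_ge0 andbT. Qed.

Lemma wdot_normalize x : x != 0 ->
  wdot ((Num.sqrt (wdot x x))^-1 *: x) ((Num.sqrt (wdot x x))^-1 *: x) = 1.
Proof.
rewrite -wdot_gt0 => x_gt0.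
rewrite wdotZl wdotZr mulrA -expr2 exprVn sqr_sqrtr ?ltW //.
by rewrite mulVf // gt_eqF.
Qed.

Lemma continuous_sum (T : topologicalType) (I : Type) (s : seq I)
    (F : I -> T -> R) :
  (forall i, continuous (F i)) -> continuous (fun t => \sum_(i <- s) F i t).
Proof.
move=> Fc; elim: s => [|a s IH] t.
  by under eq_fun do rewrite big_nil; exact: cst_continuous.
by under eq_fun do rewrite big_cons; apply: continuousD; [exact: Fc|exact: IH].
Qed.

Lemma continuous_wdot_mul (P : 'M[R]_n) :
  continuous (fun y : 'rV[R]_n => wdot (P *m y^T) (P *m y^T)).
Proof.
have lin_cont i : continuous (fun y : 'rV[R]_n => \sum_j P i j * y 0 j).
  apply: continuous_sum => j y.
  exact: continuousM (@cst_continuous _ _ (P i j) y)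
                     (@coord_continuous _ _ _ 0 j y).
have -> : (fun y : 'rV[R]_n => wdot (P *m y^T) (P *m y^T)) =
    (fun y : 'rV[R]_n =>
       \sum_i w i * (\sum_j P i j * y 0 j) * (\sum_j P i j * y 0 j)).
  apply/funext => y; apply: eq_bigr => i _; rewrite !mxE.
  by congr (_ * _ * _); apply: eq_bigr => j _; rewrite !mxE.
apply: continuous_sum => i y.
exact: continuousM (continuousM (@cst_continuous _ _ (w i) y) (lin_cont i y))
                   (lin_cont i y).
Qed.

(* The sphere [wdot x x = 1] is compact, so [wdot (P *m x) (P *m x)] attains
   its minimum on it; the nonzero [x] only shows that the sphere is nonempty. *)
Lemma wdot_mul_min (P : 'M[R]_n) x : x != 0 ->
  exists2 x0, wdot x0 x0 = 1 &
    forall z, wdot (P *m x0) (P *m x0) * wdot z z <= wdot (P *m z) (P *m z).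
Proof.
move=> x_neq0.
pose S := [set y : 'rV[R]_n | wdot y^T y^T = 1]%classic.
have S_closed : closed S.
  have cont : continuous (fun y : 'rV[R]_n => wdot y^T y^T).
    by under eq_fun => y do rewrite -[y^T]mul1mx; exact: continuous_wdot_mul.
  exact: (continuous_closedP _).1 cont _ (@closed_eq R 1).
have S_compact : compact S.
  pose box i := `[- (1 + (w i)^-1), 1 + (w i)^-1]%classic.
  apply: (subclosed_compact S_closed
           (@rV_compact R n box (fun i => @segment_compact R _ _))).
  move=> y Sy i; rewrite /box /= in_itv /= -ler_norml.
  have a2 : `|y ord0 i| ^+ 2 <= (w i)^-1.
    rewrite real_normK ?num_real // -(ler_pM2l (w_gt0 i)) mulfV ?gt_eqF //.
    by have := wdot_coord_le y^T i; rewrite Sy mxE.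
  have := normr_ge0 (y ord0 i); have : 0 < (w i)^-1 by rewrite invr_gt0.
  nra.
have [c Sc c_min] : exists2 c, c \in S & forall t, t \in S ->
    wdot (P *m c^T) (P *m c^T) <= wdot (P *m t^T) (P *m t^T).
  apply: EVT_min_rV S_compact (continuous_subspaceT (continuous_wdot_mul (P := P))).
  by exists ((Num.sqrt (wdot x x))^-1 *: x)^T; rewrite /S /= trmxK wdot_normalize.
exists c^T => [|z]; first by move: Sc; rewrite in_setE.
have [->|z_neq0] := eqVneq z 0; first by rewrite wdot0l mulr0 wdot_ge0.
have z_gt0 : 0 < wdot z z by rewrite wdot_gt0.
have := c_min ((Num.sqrt (wdot z z))^-1 *: z)^T.
rewrite !in_setE /S /= trmxK wdot_normalize // => /(_ erefl) c_le.
rewrite -ler_pdivlMr // mulrC; apply: (le_trans c_le).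
rewrite -!scalemxAr wdotZl wdotZr mulrA -expr2 exprVn sqr_sqrtr //.
exact: ltW.
Qed.

Section SelfAdjoint.
Variable P : 'M[R]_n.
Hypothesis P_sym : forall x y, wdot (P *m x) y = wdot x (P *m y).

(* The first variation of [z |-> |P z|^2 - m |z|^2] at the minimizer
   vanishes in every direction. *)
Lemma wdot_mul_min_eigen x0 :
  wdot x0 x0 = 1 ->
  (forall z, wdot (P *m x0) (P *m x0) * wdot z z <= wdot (P *m z) (P *m z)) ->
  P *m (P *m x0) = wdot (P *m x0) (P *m x0) *: x0.
Proof.
move=> x0_unit x0_min; set m := wdot (P *m x0) (P *m x0) in x0_min *.
set r := P *m (P *m x0) - m *: x0.
have r_orth h : 2 * wdot r h = 0.
  apply: (@linear_coef_eq0 _ _ (wdot (P *m h) (P *m h) - m * wdot h h)) => t.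
  have <- : wdot (P *m (x0 + t *: h)) (P *m (x0 + t *: h))
      - m * wdot (x0 + t *: h) (x0 + t *: h) =
      t * (2 * wdot r h) + t ^+ 2 * (wdot (P *m h) (P *m h) - m * wdot h h).
    rewrite mulmxDr -scalemxAr !(wdotDl, wdotDr, wdotZl, wdotZr) x0_unit.
    rewrite -(scaleNr m x0) wdotZl (P_sym (P *m x0) h) [wdot h x0]wdotC.
    by rewrite [wdot (P *m h) (P *m x0)]wdotC /m; ring.
  by rewrite subr_ge0.
have /eqP := r_orth r; rewrite mulf_eq0 pnatr_eq0 /= wdot_eq0 subr_eq0.
by move/eqP.
Qed.

Lemma eigenvalue_of_sqr_eigen x t : x != 0 -> 0 <= t ->
  P *m (P *m x) = t ^+ 2 *: x ->
  exists2 b, `|b| = t & exists2 f : 'cV[R]_n, f != 0 & P *m f = b *: f.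
Proof.
move=> x_neq0 t_ge0 PPx.
have [Px_eq|Px_neq] := eqVneq (P *m x + t *: x) 0.
  exists (- t); first by rewrite normrN ger0_norm.
  by exists x => //; rewrite scaleNr; apply/eqP; rewrite -subr_eq0 opprK Px_eq.
exists t; first by rewrite ger0_norm.
exists (P *m x + t *: x) => //.
by rewrite mulmxDr -scalemxAr PPx scalerDr scalerA -expr2 addrC.
Qed.

(* The minimum of [|P z|^2 / |z|^2] is the square of the modulus of an
   eigenvalue of [P], hence exceeds [c^2]. *)
Lemma wdot_mul_gt (c : R) : 0 <= c ->
  (forall b (f : 'cV[R]_n), f != 0 -> P *m f = b *: f -> c < `|b|) ->
  forall x, x != 0 -> c ^+ 2 * wdot x x < wdot (P *m x) (P *m x).
Proof.
move=> c_ge0 eig_gt x x_neq0.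
have [x0 x0_unit x0_min] := wdot_mul_min P x_neq0.
set m := wdot (P *m x0) (P *m x0) in x0_min.
have m_ge0 : 0 <= m by exact: wdot_ge0.
have x0_neq0 : x0 != 0 by rewrite -wdot_gt0 x0_unit.
have PPx0 : P *m (P *m x0) = Num.sqrt m ^+ 2 *: x0.
  by rewrite sqr_sqrtr // wdot_mul_min_eigen.
have [b b_norm [f f_neq0 Pf]] :=
  eigenvalue_of_sqr_eigen x0_neq0 (sqrtr_ge0 m) PPx0.
have cm : c ^+ 2 < m.
  rewrite -(sqr_sqrtr m_ge0) -b_norm ltr_pXn2r ?nnegrE //; exact: eig_gt Pf.
apply: lt_le_trans (x0_min x).
by rewrite ltr_pM2r // wdot_gt0.
Qed.

End SelfAdjoint.

End WeightedDot.
End WeightedSpectralBound.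
Import WeightedSpectralBound.

Lemma mindeg_le n (e : rel 'I_n) v : (mindeg e <= deg e v)%N.
Proof. by rewrite /mindeg -minEnat; exact: (bigmin_le n v (deg e)). Qed.

Lemma cards_symdiff_add2 (T : finType) (A B : {set T}) :
  A :&: B != set0 -> (#|symdiff A B| + 2 <= #|A| + #|B|)%N.
Proof.
rewrite -card_gt0 => AB_gt0.
have disj : (A :\: B) :&: (B :\: A) = set0.
  by apply/setP => x; rewrite !inE; case: (x \in A); case: (x \in B).
rewrite /symdiff cardsU disj cards0 subn0 !cardsD [B :&: A]setIC.
have := subset_leq_card (subsetIl A B); have := subset_leq_card (subsetIr A B).
lia.
Qed.

Lemma sum_invn_le (R : realFieldType) (T : finType) (f : T -> nat) (d : nat)
    (D : {set T}) :
  (0 < d)%N -> (forall t, d <= f t)%N ->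
  \sum_(t in D) ((f t)%:R : R)^-1 <=
    #|[set t in D | (f t == d) || (f t == d.+1)]|%:R / d%:R +
    #|D :\: [set t in D | (f t == d) || (f t == d.+1)]|%:R / d.+2%:R.
Proof.
move=> d_gt0 f_ge; set K := [set t in D | _].
have inv_le k t : (0 < k)%N -> (k <= f t)%N -> ((f t)%:R : R)^-1 <= k%:R^-1.
  move=> k_gt0 le_kf.
  by rewrite lef_pV2 ?posrE ?ltr0n ?ler_nat // (leq_trans k_gt0).
have sKD : K \subset D by apply/subsetP => t; rewrite inE => /andP[].
rewrite (big_setID K) /= (setIidPr sKD) !mulr_natl -!sumr_const.
apply: lerD; apply: ler_sum => t; first by move=> _; exact: inv_le.
rewrite !inE negb_and => /andP[/orP[/negP//|not_small] _]; apply: inv_le => //.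
by move: not_small (f_ge t); rewrite negb_or => /andP[/eqP ? /eqP ?]; lia.
Qed.

Lemma count_ineq_mindeg (R : realFieldType) (d k l m : nat) :
  (2 <= d)%N -> (k + 2 <= 2 * d)%N -> (k + l + 2 <= m)%N -> (2 * d <= m)%N ->
  k%:R / d%:R + l%:R / d.+2%:R <= ((d%:R - 1) / d%:R ^+ 2 * m%:R : R).
Proof.
move=> d_ge2 k_le l_le m_ge.
have d_gt0 : (0 : R) < d%:R by rewrite ltr0n; lia.
rewrite -subr_ge0 -[d.+2]addn2 natrD.
have -> : (d%:R - 1) / d%:R ^+ 2 * m%:R - (k%:R / d%:R + l%:R / (d%:R + 2)) =
    ((d%:R - 2) * (m%:R - 2 * d%:R) + d%:R ^+ 2 * (m%:R - 2 - k%:R - l%:R)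
      + 2 * d%:R * (2 * d%:R - 2 - k%:R)) / (d%:R ^+ 2 * (d%:R + 2)) :> R.
  by field; rewrite !gt_eqF // ltr_wpDr.
apply: divr_ge0; last by rewrite mulr_ge0 ?exprn_ge0 ?addr_ge0 ?ltW.
have d_ge2R : (2 : R) <= d%:R by rewrite (ler_nat R 2).
have k_leR : k%:R + 2 <= 2 * d%:R :> R.
  by rewrite -(natrM R 2) -(natrD R k 2) ler_nat.
have l_leR : k%:R + l%:R + 2 <= m%:R :> R by rewrite -!natrD ler_nat.
have m_geR : 2 * d%:R <= m%:R :> R by rewrite -(natrM R 2) ler_nat.
by rewrite !addr_ge0 // !mulr_ge0 ?exprn_ge0 //; lra.
Qed.

Section RandomWalk.
Variables (R : realType) (n : nat) (e : rel 'I_n).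
Hypothesis e_sym : symmetric e.
Hypothesis deg_gt0 : forall v, (0 < deg e v)%N.

Local Notation degR := (fun v => (deg e v)%:R : R).

Lemma degR_gt0 v : 0 < degR v.
Proof. by rewrite ltr0n. Qed.

Definition walk_mx : 'M[R]_n := \matrix_(v, w) ((e v w)%:R / (deg e v)%:R).

Lemma walk_mx_eigen b (f : 'cV[R]_n) :
  f != 0 -> walk_mx *m f = b *: f -> nlap_eigenvalue R e (1 - b).
Proof.
move=> f_neq0 Wf; exists f => //.
have -> : nlaplacian R e = 1%:M - walk_mx by apply/matrixP => v w; rewrite !mxE.
by rewrite mulmxBl mul1mx Wf scalerBl scale1r.
Qed.

Lemma degR_walk_mx v (x : 'cV[R]_n) :
  degR v * (walk_mx *m x) v 0 = \sum_w (e v w)%:R * x w 0.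
Proof.
rewrite mxE mulr_sumr; apply: eq_bigr => w _.
by rewrite mxE mulrA [degR v * _]mulrC divfK ?gt_eqF ?degR_gt0.
Qed.

Lemma wdot_walk_mx (x y : 'cV[R]_n) :
  wdot degR (walk_mx *m x) y = wdot degR x (walk_mx *m y).
Proof.
rewrite /wdot; under eq_bigr do rewrite degR_walk_mx mulr_suml.
under [RHS]eq_bigr do rewrite mulrAC degR_walk_mx mulr_suml.
rewrite exchange_big /=; apply: eq_bigr => v _; apply: eq_bigr => w _.
by rewrite (e_sym w v); ring.
Qed.

Lemma wdot_walk_mx_delta_sub u v :
  wdot degR (walk_mx *m (delta_mx u 0 - delta_mx v 0))
            (walk_mx *m (delta_mx u 0 - delta_mx v 0)) =
    \sum_(w in symdiff (nbhd e u) (nbhd e v)) (degR w)^-1.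
Proof.
rewrite /wdot [RHS]big_mkcond; apply: eq_bigr => w _.
rewrite mulmxBr -!colE !mxE.
rewrite /symdiff /nbhd !inE (e_sym w u) (e_sym w v).
have := degR_gt0 w; rewrite lt0r => /andP[deg_neq0 _].
by case: (e u w); case: (e v w); rewrite /=; field.
Qed.

Lemma walk_spectral_symdiff (c : R) u v : 0 <= c ->
  (forall lam, nlap_eigenvalue R e lam -> c < `|1 - lam|) -> u != v ->
  c ^+ 2 * ((deg e u)%:R + (deg e v)%:R) <
    \sum_(w in symdiff (nbhd e u) (nbhd e v)) ((deg e w)%:R)^-1.
Proof.
move=> c_ge0 eig_gt uv.
have x_neq0 : delta_mx u 0 - delta_mx v 0 != 0 :> 'cV[R]_n.
  apply/eqP => /matrixP/(_ u 0); rewrite !mxE eqxx (negPf uv) /=.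
  by move/eqP; rewrite subr0 oner_eq0.
rewrite -(wdot_delta_sub degR uv) -wdot_walk_mx_delta_sub.
apply: (wdot_mul_gt degR_gt0 wdot_walk_mx c_ge0 _ x_neq0) => b f f_neq0 Wf.
by have := eig_gt _ (walk_mx_eigen f_neq0 Wf); rewrite opprB addrC subrK.
Qed.

End RandomWalk.

Theorem mainTheorem20 (R : realType) (n : nat) (e : rel 'I_n) :
  simple_graph e ->
  connected_graph e ->
  (3 <= n)%N ->
  (3 <= mindeg e)%N ->
  (forall lam : R, nlap_eigenvalue R e lam ->
     Num.sqrt ((mindeg e)%:R - 1) / (mindeg e)%:R < `|1 - lam|) ->
  forall u v : 'I_n, u != v ->
  nbhd e u :&: nbhd e v != set0 ->
  (2 * mindeg e - 1 <=
     #|[set w in symdiff (nbhd e u) (nbhd e v) |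
         (deg e w == mindeg e) || (deg e w == (mindeg e).+1)]|)%N.
Proof.
move=> [e_sym _] _ _ d_ge3 eig_gt u v uv common_nbr.
set d := mindeg e in d_ge3 eig_gt *.
have deg_ge w : (d <= deg e w)%N by exact: mindeg_le.
have d_gt0 : (0 < d)%N by lia.
have deg_gt0 w : (0 < deg e w)%N by exact: leq_trans (deg_ge w).
set D := symdiff _ _; set K := [set w in D | _].
have c_ge0 : 0 <= Num.sqrt (d%:R - 1) / d%:R :> R by rewrite divr_ge0 ?sqrtr_ge0.
have c_sqr : (Num.sqrt (d%:R - 1) / d%:R) ^+ 2 = (d%:R - 1) / d%:R ^+ 2 :> R.
  by rewrite expr_div_n sqr_sqrtr // subr_ge0 (ler_nat R 1); lia.
have := walk_spectral_symdiff e_sym deg_gt0 c_ge0 eig_gt uv.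
rewrite c_sqr -natrD => /lt_le_trans/(_ (sum_invn_le R D d_gt0 deg_ge)).
rewrite -/K => deg_bound.
have card_K : (#|K| + #|D :\: K| + 2 <= deg e u + deg e v)%N.
  have sub_KD : K \subset D by apply/subsetP => w; rewrite inE => /andP[].
  have := cards_symdiff_add2 common_nbr.
  by rewrite -/D -(cardsID K D) (setIidPr sub_KD).
have deg_uv : (2 * d <= deg e u + deg e v)%N by rewrite mul2n -addnn leq_add.
rewrite leqNgt; apply/negP => K_small.
have K_le : (#|K| + 2 <= 2 * d)%N by lia.
have := count_ineq_mindeg R (ltnW d_ge3) K_le card_K deg_uv.
by rewrite leNgt deg_bound.
Qed.
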